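(* Let $c_1,c_2\in\mathbb{R}$ with $c_1c_2=0$ and $c:=\max\{|c_1|,|c_2|\}\neq0$. Let $c_{2k-1}=c_1$, $c_{2k}=c_2$ for $k\in\mathbb{N}$, and let $J$ be the self-adjoint operator in $l^2(\mathbb{N})$ given by the (block-diagonal) matrix with diagonal entries $q_n=n$ and off-diagonal entries $\lambda_n=c_nn$, i.e. $(Ju)_1=u_1+c_1u_2$, $(Ju)_n=\lambda_{n-1}u_{n-1}+nu_n+\lambda_nu_{n+1}$ for $n\ge2$, on its natural domain $\{u\in l^2(\mathbb{N}):Ju\in l^2(\mathbb{N})\}$. Then $\sigma(J)$ is the closure of the set of eigenvalues of $J$, and this set of eigenvalues is $$\{\lambda_n^+,\lambda_n^-:\ n\in\mathbb{N}\}\ \text{ if } c_1\neq0,\ c_2=0,\qquad \{1\}\cup\{\tilde\lambda_n^+,\tilde\lambda_n^-:\ n\ge2\}\ \text{ if } c_1=0,\ c_2\neq0,$$ where $\lambda_n^{\pm}=\frac{4n-1\pm\sqrt{4c^2(2n-1)^2+1}}{2}$ and $\tilde\lambda_n^{\pm}=\frac{4n-3\pm\sqrt{4c^2(2n-2)^2+1}}{2}$, and as $n\to\infty$: $$\lambda_n^+,\ \tilde\lambda_n^+=2(1+c)n+O(1),$$ $$\lambda_n^-=2(1-c)n+\left(c-\tfrac12\right)-\frac1{16cn}+O\left(\tfrac1{n^2}\right),$$ $$\tilde\lambda_n^-=2(1-c)n+\left(2c-\tfrac32\right)-\frac1{16cn}+O\left(\tfrac1{n^2}\right).$$ *)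

From Stdlib Require Import Reals.
From Coquelicot Require Import Coquelicot.
Open Scope R_scope.

(* Sequences in l^2(N) over C.  N = {1,2,...}; index k : nat stands for n = k+1. *)
Definition l2 (u : nat -> C) : Prop := ex_series (fun k => (Cmod (u k)) ^ 2).
Definition l2norm2 (u : nat -> C) : R := Series (fun k => (Cmod (u k)) ^ 2).

(* c_n = c1 for n odd, c2 for n even (n = k+1) *)
Definition cseq (c1 c2 : R) (k : nat) : R := if Nat.even k then c1 else c2.
Definition qn (k : nat) : R := INR (S k).
Definition lam (c1 c2 : R) (k : nat) : R := cseq c1 c2 k * INR (S k).

Definition Jop (c1 c2 : R) (u : nat -> C) (k : nat) : C :=
  Cplus (Cplus (match k with O => RtoC 0 | S j => Cmult (RtoC (lam c1 c2 j)) (u j) end)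
               (Cmult (RtoC (qn k)) (u k)))
        (Cmult (RtoC (lam c1 c2 k)) (u (S k))).

Definition Jdom (c1 c2 : R) (u : nat -> C) : Prop := l2 u /\ l2 (Jop c1 c2 u).

Definition Jshift (c1 c2 : R) (z : C) (u : nat -> C) (k : nat) : C :=
  Cminus (Jop c1 c2 u k) (Cmult z (u k)).

Definition in_resolvent (c1 c2 : R) (z : C) : Prop :=
  (forall f, l2 f -> exists! u, Jdom c1 c2 u /\ forall k, Jshift c1 c2 z u k = f k) /\
  (exists K : R, forall u, Jdom c1 c2 u -> l2norm2 u <= K * l2norm2 (Jshift c1 c2 z u)).

Definition spectrum (c1 c2 : R) (z : C) : Prop := ~ in_resolvent c1 c2 z.

Definition eigenvalue (c1 c2 : R) (z : C) : Prop :=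
  exists u, Jdom c1 c2 u /\ (exists k, u k <> RtoC 0) /\
            forall k, Jop c1 c2 u k = Cmult z (u k).

Definition closureC (E : C -> Prop) (z : C) : Prop :=
  forall eps : R, 0 < eps -> exists w, E w /\ Cmod (Cminus z w) < eps.

(* explicit eigenvalues, n : nat is the actual index n *)
Definition lamp (c : R) (n : nat) : R :=
  (4 * INR n - 1 + sqrt (4 * c ^ 2 * (2 * INR n - 1) ^ 2 + 1)) / 2.
Definition lamm (c : R) (n : nat) : R :=
  (4 * INR n - 1 - sqrt (4 * c ^ 2 * (2 * INR n - 1) ^ 2 + 1)) / 2.
Definition tlamp (c : R) (n : nat) : R :=
  (4 * INR n - 3 + sqrt (4 * c ^ 2 * (2 * INR n - 2) ^ 2 + 1)) / 2.
Definition tlamm (c : R) (n : nat) : R :=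
  (4 * INR n - 3 - sqrt (4 * c ^ 2 * (2 * INR n - 2) ^ 2 + 1)) / 2.

Definition bigO_seq (f g h : nat -> R) : Prop :=
  exists M N0, forall n, (N0 <= n)%nat -> Rabs (f n - g n) <= M * Rabs (h n).

From Stdlib Require Import Reals Lra Lia FunctionalExtensionality Classical.
From Coquelicot Require Import Coquelicot.
Open Scope R_scope.

(* Since [c1 c2 = 0], every other off-diagonal entry of [J] vanishes, so [J] is the direct sum
   of the real symmetric blocks [[q_a, lam_a], [lam_a, q_(a+1)]], preceded by the [1 x 1]
   block [(1)] when [c1 = 0].  The eigenvalues of [J] are those of the blocks, i.e. the explicit
   [lamp], [lamm] (resp. [1], [tlamp], [tlamm]).  If [z] is at distance [eps > 0] from all of
   them, every block of [J - z] is bounded below by [eps], so [(J - z) u = f] is solved block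
   by block with [|u| <= C |f|]; if [z] is a limit of eigenvalues, the eigenvectors violate
   every such bound.  The asymptotics come from
   [sqrt (T^2 + 1) - T = 1 / (sqrt (T^2 + 1) + T)]. *)

(* Eigenvalues of [[p, b], [b, r]]. *)
Definition sym2_eig_plus (p r b : R) : R := (p + r + sqrt ((p - r) ^ 2 + 4 * b ^ 2)) / 2.
Definition sym2_eig_minus (p r b : R) : R := (p + r - sqrt ((p - r) ^ 2 + 4 * b ^ 2)) / 2.

Lemma sym2_discr_sqrt_sq (p r b : R) :
  sqrt ((p - r) ^ 2 + 4 * b ^ 2) * sqrt ((p - r) ^ 2 + 4 * b ^ 2) = (p - r) ^ 2 + 4 * b ^ 2.
Proof. apply sqrt_sqrt; generalize (pow2_ge_0 (p - r)) (pow2_ge_0 b); lra. Qed.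

Lemma sym2_eig_sum (p r b : R) : sym2_eig_plus p r b + sym2_eig_minus p r b = p + r.
Proof. unfold sym2_eig_plus, sym2_eig_minus; field. Qed.

Lemma sym2_eig_prod (p r b : R) : sym2_eig_plus p r b * sym2_eig_minus p r b = p * r - b ^ 2.
Proof.
  unfold sym2_eig_plus, sym2_eig_minus.
  assert (HS := sym2_discr_sqrt_sq p r b).
  set (S := sqrt _) in *.
  replace ((p + r + S) / 2 * ((p + r - S) / 2)) with (((p + r) ^ 2 - S * S) / 4) by field.
  rewrite HS; field.
Qed.

Lemma sym2_eig_shift (p r b x : R) :
  sym2_eig_plus (p - x) (r - x) b = sym2_eig_plus p r b - x /\
  sym2_eig_minus (p - x) (r - x) b = sym2_eig_minus p r b - x.
Proof.
  unfold sym2_eig_plus, sym2_eig_minus.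
  replace (p - x - (r - x)) with (p - r) by ring. split; field.
Qed.

Lemma sym2_charpoly (p r b mu : R) :
  mu = sym2_eig_plus p r b \/ mu = sym2_eig_minus p r b ->
  mu * mu - (p + r) * mu + (p * r - b ^ 2) = 0.
Proof.
  rewrite <- (sym2_eig_sum p r b), <- (sym2_eig_prod p r b).
  intros [-> | ->]; ring.
Qed.

Lemma psd2_quadform_nonneg (N11 N12 N22 s1 s2 : R) :
  0 <= N11 + N22 -> 0 <= N11 * N22 - N12 ^ 2 ->
  0 <= N11 * s1 ^ 2 + 2 * N12 * s1 * s2 + N22 * s2 ^ 2.
Proof.
  intros Htr Hdet.
  destruct (Req_dec N11 0) as [E | E].
  - subst N11. assert (N12 = 0) by nra. subst N12. nra.
  - assert (H11 : 0 < N11) by nra.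
    apply (Rmult_le_reg_l N11); [lra|].
    replace (N11 * (N11 * s1 ^ 2 + 2 * N12 * s1 * s2 + N22 * s2 ^ 2)) with
      ((N11 * s1 + N12 * s2) ^ 2 + (N11 * N22 - N12 ^ 2) * s2 ^ 2) by ring.
    generalize (pow2_ge_0 (N11 * s1 + N12 * s2)) (pow2_ge_0 s2). nra.
Qed.

(* For [M = [[P, b], [b, Q]]] with eigenvalues [a1], [a2], [|M s|^2 - m |s|^2] is the quadratic
   form of [M^2 - m], whose eigenvalues [a_i^2 - m] are nonnegative. *)
Lemma sym2_norm_lower_bound (P Q b a1 a2 m s1 s2 : R) :
  a1 + a2 = P + Q -> a1 * a2 = P * Q - b ^ 2 -> m <= a1 ^ 2 -> m <= a2 ^ 2 ->
  m * (s1 ^ 2 + s2 ^ 2) <= (P * s1 + b * s2) ^ 2 + (b * s1 + Q * s2) ^ 2.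
Proof.
  intros Hs Hp H1 H2.
  assert (0 <= (P ^ 2 + b ^ 2 - m) * s1 ^ 2 + 2 * (b * (P + Q)) * s1 * s2
               + (Q ^ 2 + b ^ 2 - m) * s2 ^ 2).
  { apply psd2_quadform_nonneg.
    - replace (P ^ 2 + b ^ 2 - m + (Q ^ 2 + b ^ 2 - m))
        with ((P + Q) ^ 2 - 2 * (P * Q - b ^ 2) - 2 * m) by ring.
      rewrite <- Hs, <- Hp. nra.
    - replace ((P ^ 2 + b ^ 2 - m) * (Q ^ 2 + b ^ 2 - m) - (b * (P + Q)) ^ 2)
        with ((P * Q - b ^ 2) ^ 2 - m * ((P + Q) ^ 2 - 2 * (P * Q - b ^ 2)) + m ^ 2) by ring.
      rewrite <- Hs, <- Hp. nra. }
  nra.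
Qed.

Lemma Cmod2_re_im (w : C) : Cmod w ^ 2 = fst w ^ 2 + snd w ^ 2.
Proof. exact (Cmod2_alt w). Qed.

(* For real symmetric [M], [|(M - x - i y) v|^2 = |(M - x) v|^2 + y^2 |v|^2]. *)
Lemma sym2_shift_lower_bound (p r b eps : R) (z v1 v2 : C) :
  0 <= eps ->
  eps <= Cmod (z - sym2_eig_plus p r b)%C -> eps <= Cmod (z - sym2_eig_minus p r b)%C ->
  eps ^ 2 * (Cmod v1 ^ 2 + Cmod v2 ^ 2) <=
  Cmod ((p - z) * v1 + b * v2)%C ^ 2 + Cmod (b * v1 + (r - z) * v2)%C ^ 2.
Proof.
  intros He H1 H2.
  assert (E1 : eps ^ 2 <= Cmod (z - sym2_eig_plus p r b)%C ^ 2) by (apply pow_incr; lra).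
  assert (E2 : eps ^ 2 <= Cmod (z - sym2_eig_minus p r b)%C ^ 2) by (apply pow_incr; lra).
  clear H1 H2.
  destruct (sym2_eig_shift p r b (fst z)) as [Ep Em].
  assert (Hs := sym2_eig_sum (p - fst z) (r - fst z) b).
  assert (Hp := sym2_eig_prod (p - fst z) (r - fst z) b).
  rewrite Ep, Em in Hs, Hp.
  set (a1 := sym2_eig_plus p r b - fst z) in *.
  set (a2 := sym2_eig_minus p r b - fst z) in *.
  rewrite !Cmod2_re_im in *.
  destruct z as [x y], v1 as [s1 t1], v2 as [s2 t2]; simpl in *.
  assert (A1 : eps ^ 2 - y ^ 2 <= a1 ^ 2) by (unfold a1; nra).
  assert (A2 : eps ^ 2 - y ^ 2 <= a2 ^ 2) by (unfold a2; nra).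
  assert (Q1 := sym2_norm_lower_bound _ _ _ _ _ _ s1 s2 Hs Hp A1 A2).
  assert (Q2 := sym2_norm_lower_bound _ _ _ _ _ _ t1 t2 Hs Hp A1 A2).
  nra.
Qed.

Lemma ex_series_finite_support (a : nat -> R) (N : nat) :
  (forall k, (N <= k)%nat -> a k = 0) -> ex_series a.
Proof.
  intros H. apply (ex_series_incr_n a N).
  apply ex_series_ext with (fun n => 0 * (/ 2) ^ n).
  - intros n. rewrite H by lia. apply Rmult_0_l.
  - apply (ex_series_scal_l 0 (fun n => (/ 2) ^ n)), ex_series_geom.
    rewrite Rabs_pos_eq; lra.
Qed.

Lemma ex_series_le_R (a b : nat -> R) :
  (forall n, 0 <= a n <= b n) -> ex_series b -> ex_series a.
Proof.
  intros H. apply (ex_series_le (K := R_AbsRing) (V := R_CompleteNormedModule)).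
  intros n. change (norm (a n)) with (Rabs (a n)). rewrite Rabs_pos_eq; apply H.
Qed.

Lemma Series_ge_term (a : nat -> R) (k : nat) :
  (forall n, 0 <= a n) -> ex_series a -> a k <= Series a.
Proof.
  intros H Ha. rewrite (Series_incr_n a (S k)) by (auto; lia). simpl pred.
  assert (0 <= Series (fun j => a (S k + j)%nat)).
  { replace 0 with (Series (fun _ => 0)).
    - apply Series_le; [intros; split; [lra | apply H]|].
      apply (ex_series_incr_n a (S k)), Ha.
    - rewrite (Series_ext _ (fun n => 0 * a n)), Series_scal_l by (intros; ring). ring. }
  assert (a k <= sum_f_R0 a k).
  { destruct k as [|k]; simpl; [lra|].
    enough (0 <= sum_f_R0 a k) by (specialize (H (S k)); lra).
    clear -H. induction k as [|k IH]; simpl; [apply H|]. specialize (H (S k)); lra. }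
  lra.
Qed.

Lemma Cmod2_plus_le (u v : C) : Cmod (u + v)%C ^ 2 <= 2 * Cmod u ^ 2 + 2 * Cmod v ^ 2.
Proof.
  rewrite !Cmod2_re_im. destruct u as [r1 i1], v as [r2 i2]; simpl.
  generalize (pow2_ge_0 (r1 - r2)) (pow2_ge_0 (i1 - i2)). nra.
Qed.

Lemma Cmod2_mult (u v : C) : Cmod (u * v)%C ^ 2 = Cmod u ^ 2 * Cmod v ^ 2.
Proof. rewrite Cmod_mult. ring. Qed.

Lemma Cmod2_eq0 (w : C) : Cmod w ^ 2 = 0 -> w = 0%C.
Proof. intros H. apply Cmod_eq_0. generalize (Cmod_ge_0 w). nra. Qed.

Lemma l2_ext (u v : nat -> C) : (forall k, u k = v k) -> l2 u -> l2 v.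
Proof.
  intros H. apply ex_series_ext. intros k. rewrite H. reflexivity.
Qed.

Lemma l2_plus (u v : nat -> C) : l2 u -> l2 v -> l2 (fun k => u k + v k)%C.
Proof.
  intros Hu Hv.
  apply ex_series_le_R with (fun k => 2 * Cmod (u k) ^ 2 + 2 * Cmod (v k) ^ 2).
  - intros n; split; [apply pow2_ge_0 | apply Cmod2_plus_le].
  - apply (ex_series_plus (fun k => 2 * Cmod (u k) ^ 2) (fun k => 2 * Cmod (v k) ^ 2)).
    + apply (ex_series_scal_l 2 (fun k => Cmod (u k) ^ 2)), Hu.
    + apply (ex_series_scal_l 2 (fun k => Cmod (v k) ^ 2)), Hv.
Qed.

Lemma l2_scal (a : C) (u : nat -> C) : l2 u -> l2 (fun k => a * u k)%C.
Proof.
  intros Hu. apply ex_series_ext with (fun k => Cmod a ^ 2 * Cmod (u k) ^ 2).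
  - intros k. rewrite Cmod2_mult. reflexivity.
  - apply (ex_series_scal_l (Cmod a ^ 2) (fun k => Cmod (u k) ^ 2)), Hu.
Qed.

Lemma l2_finite_support (u : nat -> C) (N : nat) :
  (forall k, (N <= k)%nat -> u k = 0%C) -> l2 u.
Proof.
  intros H. apply ex_series_finite_support with N. intros k Hk.
  rewrite H, Cmod_0 by exact Hk. ring.
Qed.

(** * Block structure of [J] *)

Definition decoupled_left (c1 c2 : R) (a : nat) : Prop := a = 0%nat \/ lam c1 c2 (pred a) = 0.

(* Rows [a] and [a + 1] of [J] only involve the entries of the symmetric block
   [[qn a, lam a], [lam a, qn (a + 1)]]. *)
Definition block2 (c1 c2 : R) (a : nat) : Prop :=
  decoupled_left c1 c2 a /\ lam c1 c2 (S a) = 0 /\ lam c1 c2 a <> 0.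

(* Otherwise row [0] is a [1 x 1] block with entry [qn 0 = 1]. *)
Definition block_diagonal (c1 c2 : R) : Prop := forall k,
  (exists a, (k = a \/ k = S a) /\ block2 c1 c2 a) \/ (k = 0%nat /\ lam c1 c2 0 = 0).

Definition block_eig_plus (c1 c2 : R) (a : nat) : R :=
  sym2_eig_plus (qn a) (qn (S a)) (lam c1 c2 a).
Definition block_eig_minus (c1 c2 : R) (a : nat) : R :=
  sym2_eig_minus (qn a) (qn (S a)) (lam c1 c2 a).

Lemma Jshift_block_fst (c1 c2 : R) (z : C) (w : nat -> C) (a : nat) :
  decoupled_left c1 c2 a ->
  Jshift c1 c2 z w a = ((qn a - z) * w a + lam c1 c2 a * w (S a))%C.
Proof.
  unfold Jshift, Jop. destruct a as [|j]; [intros; ring|].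
  intros [E | E]; [discriminate | simpl in E; rewrite E; ring].
Qed.

Lemma Jshift_block_snd (c1 c2 : R) (z : C) (w : nat -> C) (a : nat) :
  lam c1 c2 (S a) = 0 ->
  Jshift c1 c2 z w (S a) = (lam c1 c2 a * w a + (qn (S a) - z) * w (S a))%C.
Proof. intros E. unfold Jshift, Jop. rewrite E. ring. Qed.

Lemma Jshift_single (c1 c2 : R) (z : C) (w : nat -> C) :
  lam c1 c2 0 = 0 -> Jshift c1 c2 z w 0%nat = ((1 - z) * w 0%nat)%C.
Proof. intros E. unfold Jshift, Jop. rewrite E. unfold qn. simpl INR. ring. Qed.

Lemma Jshift_sub (c1 c2 : R) (z : C) (u v : nat -> C) (k : nat) :
  Jshift c1 c2 z (fun j => u j - v j)%C k = (Jshift c1 c2 z u k - Jshift c1 c2 z v k)%C.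
Proof. unfold Jshift, Jop. destruct k; ring. Qed.

Lemma Jshift_l2 (c1 c2 : R) (z : C) (u : nat -> C) :
  Jdom c1 c2 u -> l2 (Jshift c1 c2 z u).
Proof.
  intros [Hu HJu]. apply l2_ext with (fun k => Jop c1 c2 u k + (- z) * u k)%C.
  - intros k. unfold Jshift. ring.
  - apply l2_plus; [exact HJu | apply l2_scal, Hu].
Qed.

Lemma eigenvalue_of_Jshift_zero (c1 c2 : R) (z : C) (v : nat -> C) (k0 : nat) :
  l2 v -> v k0 <> 0%C -> (forall k, Jshift c1 c2 z v k = 0%C) -> eigenvalue c1 c2 z.
Proof.
  intros Hv Hk0 H0.
  assert (HJ : forall k, Jop c1 c2 v k = (z * v k)%C).
  { intros k. specialize (H0 k). unfold Jshift in H0.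
    rewrite <- (Cplus_0_l (z * v k)), <- H0. ring. }
  exists v. split; [split | split; [exists k0; exact Hk0 | exact HJ]].
  - exact Hv.
  - apply l2_ext with (fun k => z * v k)%C; [intros; symmetry; apply HJ | apply l2_scal, Hv].
Qed.

Definition block_vec (a : nat) (x y : C) (k : nat) : C :=
  if Nat.eqb k a then x else if Nat.eqb k (S a) then y else 0%C.

Lemma block_vec_fst (a : nat) (x y : C) : block_vec a x y a = x.
Proof. unfold block_vec. now rewrite Nat.eqb_refl. Qed.

Lemma block_vec_snd (a : nat) (x y : C) : block_vec a x y (S a) = y.
Proof.
  unfold block_vec. destruct (Nat.eqb_spec (S a) a); [lia|]. now rewrite Nat.eqb_refl.
Qed.

Lemma block_vec_outside (a : nat) (x y : C) (k : nat) :
  k <> a -> k <> S a -> block_vec a x y k = 0%C.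
Proof.
  intros H1 H2. unfold block_vec.
  destruct (Nat.eqb_spec k a); [contradiction|].
  destruct (Nat.eqb_spec k (S a)); [contradiction | reflexivity].
Qed.

Lemma block_vec_l2 (a : nat) (x y : C) : l2 (block_vec a x y).
Proof. apply l2_finite_support with (S (S a)). intros k Hk. apply block_vec_outside; lia. Qed.

Lemma Jshift_block_vec_outside (c1 c2 : R) (z x y : C) (a k : nat) :
  decoupled_left c1 c2 a -> lam c1 c2 (S a) = 0 -> k <> a -> k <> S a ->
  Jshift c1 c2 z (block_vec a x y) k = 0%C.
Proof.
  intros HL HR Ha HSa. unfold Jshift, Jop.
  rewrite (block_vec_outside a x y k Ha HSa).
  assert (Hnext : (lam c1 c2 k * block_vec a x y (S k))%C = 0%C).
  { destruct (Nat.eq_dec (S k) a) as [E | E].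
    - destruct HL as [HL | HL]; [lia|]. rewrite <- E in HL. simpl in HL. rewrite HL. ring.
    - rewrite block_vec_outside by lia. ring. }
  assert (Hprev : match k with O => RtoC 0 | S j => (lam c1 c2 j * block_vec a x y j)%C end = 0%C).
  { destruct k as [|j]; [reflexivity|].
    destruct (Nat.eq_dec j (S a)) as [-> | E]; [rewrite HR; ring|].
    rewrite block_vec_outside by lia. ring. }
  rewrite Hnext, Hprev. ring.
Qed.

(* The eigenvector [(lam a, mu - qn a)] of the block, extended by zero. *)
Lemma eigenvalue_of_block2 (c1 c2 : R) (a : nat) (mu : R) :
  block2 c1 c2 a -> mu = block_eig_plus c1 c2 a \/ mu = block_eig_minus c1 c2 a ->
  eigenvalue c1 c2 mu.
Proof.
  intros [HL [HR Hb]] Hmu. apply sym2_charpoly in Hmu.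
  set (v := block_vec a (lam c1 c2 a) (mu - qn a)).
  apply (eigenvalue_of_Jshift_zero c1 c2 mu v a (block_vec_l2 _ _ _)).
  { unfold v. rewrite block_vec_fst. intros E. apply Hb. now injection E. }
  intros k.
  destruct (Nat.eq_dec k a) as [-> | Ka].
  - unfold v. rewrite Jshift_block_fst, block_vec_fst, block_vec_snd by exact HL.
    apply injective_projections; simpl; ring.
  - destruct (Nat.eq_dec k (S a)) as [-> | KSa].
    + unfold v. rewrite Jshift_block_snd, block_vec_fst, block_vec_snd by exact HR.
      apply injective_projections; simpl; nra.
    + apply Jshift_block_vec_outside; assumption.
Qed.

Lemma eigenvalue_one_of_single (c1 c2 : R) : lam c1 c2 0 = 0 -> eigenvalue c1 c2 1.
Proof.
  intros H0. set (v := block_vec 0 1 0).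
  apply (eigenvalue_of_Jshift_zero c1 c2 1 v 0 (block_vec_l2 _ _ _)).
  { unfold v. rewrite block_vec_fst. intros E. injection E. lra. }
  assert (Hv : forall j, v (S j) = 0%C).
  { intros [|j]; [apply block_vec_snd | apply block_vec_outside; lia]. }
  intros [|k].
  - rewrite Jshift_single by exact H0. ring.
  - unfold Jshift, Jop. rewrite !Hv.
    destruct k; [rewrite H0 | rewrite Hv]; ring.
Qed.

Lemma Cmod_sub_pos (z w : C) : z <> w -> 0 < Cmod (z - w)%C.
Proof.
  intros H. apply Cmod_gt_0. intros E. apply H.
  rewrite <- (Cplus_0_l w), <- E. ring.
Qed.

Lemma Jshift_block2_lower_bound (c1 c2 : R) (a : nat) (z : C) (w : nat -> C) (eps : R) :
  decoupled_left c1 c2 a -> lam c1 c2 (S a) = 0 -> 0 <= eps ->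
  eps <= Cmod (z - block_eig_plus c1 c2 a)%C -> eps <= Cmod (z - block_eig_minus c1 c2 a)%C ->
  eps ^ 2 * (Cmod (w a) ^ 2 + Cmod (w (S a)) ^ 2) <=
  Cmod (Jshift c1 c2 z w a) ^ 2 + Cmod (Jshift c1 c2 z w (S a)) ^ 2.
Proof.
  intros HL HR He H1 H2. rewrite Jshift_block_fst, Jshift_block_snd by assumption.
  apply sym2_shift_lower_bound; assumption.
Qed.

Lemma Jshift_single_norm (c1 c2 : R) (z : C) (w : nat -> C) :
  lam c1 c2 0 = 0 -> Cmod (Jshift c1 c2 z w 0%nat) = Cmod (z - 1)%C * Cmod (w 0%nat).
Proof.
  intros H0. rewrite Jshift_single, Cmod_mult by exact H0.
  replace (1 - z)%C with (- (z - 1))%C by ring. now rewrite Cmod_opp.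
Qed.

Lemma eigenvalue_block_cases (c1 c2 : R) (z : C) :
  block_diagonal c1 c2 -> eigenvalue c1 c2 z ->
  (exists a, block2 c1 c2 a /\
     (z = block_eig_plus c1 c2 a \/ z = block_eig_minus c1 c2 a)) \/
  (lam c1 c2 0 = 0 /\ z = 1).
Proof.
  intros HB [u [_ [[k Hk] HJ]]].
  assert (H0 : forall j, Jshift c1 c2 z u j = 0%C).
  { intros j. unfold Jshift. rewrite HJ. ring. }
  destruct (HB k) as [[a [Hka Ha]] | [-> Hsingle]].
  - left. exists a. split; [exact Ha|].
    destruct (classic (z = block_eig_plus c1 c2 a)) as [|N1]; [now left|].
    destruct (classic (z = block_eig_minus c1 c2 a)) as [|N2]; [now right|].
    exfalso. destruct Ha as [HL [HR _]].
    set (eps := Rmin (Cmod (z - block_eig_plus c1 c2 a)) (Cmod (z - block_eig_minus c1 c2 a))).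
    assert (He : 0 < eps) by (apply Rmin_pos; apply Cmod_sub_pos; assumption).
    assert (B := Jshift_block2_lower_bound c1 c2 a z u eps HL HR (Rlt_le _ _ He)
                   (Rmin_l _ _) (Rmin_r _ _)).
    rewrite !H0, Cmod_0 in B.
    assert (0 < eps ^ 2) by (apply pow_lt, He).
    generalize (pow2_ge_0 (Cmod (u a))) (pow2_ge_0 (Cmod (u (S a)))). intros.
    apply Hk. destruct Hka as [-> | ->]; apply Cmod2_eq0; nra.
  - right. split; [exact Hsingle|].
    apply NNPP. intros N. apply Hk.
    assert (E := f_equal Cmod (H0 0%nat)).
    rewrite Jshift_single_norm, Cmod_0 in E by exact Hsingle.
    apply Cmod_eq_0. apply Rmult_integral in E.
    destruct E as [E | E]; [|exact E].
    exfalso. apply (Rlt_irrefl 0). rewrite <- E at 2. now apply Cmod_sub_pos.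
Qed.

(** * Bounded inverse of [J - z] away from the eigenvalues *)

Definition shiftR (a : nat -> R) (k : nat) : R := match k with O => 0 | S j => a j end.

(* Squared norm of a sequence on the rows [k - 1], [k], [k + 1]; every row lies in a block
   contained in these three rows. *)
Definition local_norm2 (g : nat -> C) (k : nat) : R :=
  Cmod (g k) ^ 2 + Cmod (g (S k)) ^ 2 + shiftR (fun j => Cmod (g j) ^ 2) k.

Lemma local_norm2_ex_series (g : nat -> C) : l2 g -> ex_series (local_norm2 g).
Proof.
  intros H. unfold local_norm2.
  apply (ex_series_plus (fun k => Cmod (g k) ^ 2 + Cmod (g (S k)) ^ 2)).
  - apply (ex_series_plus (fun k => Cmod (g k) ^ 2)); [exact H|].
    apply (proj1 (ex_series_incr_1 (fun k => Cmod (g k) ^ 2))), H.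
  - apply (proj2 (ex_series_incr_1 (shiftR _))), H.
Qed.

Lemma local_norm2_Series (g : nat -> C) : l2 g -> Series (local_norm2 g) <= 3 * l2norm2 g.
Proof.
  intros H. unfold local_norm2, l2norm2.
  assert (H1 : ex_series (fun k => Cmod (g (S k)) ^ 2))
    by apply (proj1 (ex_series_incr_1 (fun k => Cmod (g k) ^ 2))), H.
  assert (Hs : ex_series (shiftR (fun j => Cmod (g j) ^ 2)))
    by apply (proj2 (ex_series_incr_1 (shiftR _))), H.
  rewrite Series_plus, Series_plus; [| exact H | exact H1 |
    apply (ex_series_plus (fun k => Cmod (g k) ^ 2)); assumption | exact Hs].
  rewrite (Series_incr_1_aux (shiftR _)) by reflexivity. cbv beta iota delta [shiftR].
  rewrite (Series_incr_1 (fun k => Cmod (g k) ^ 2)) by exact H.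
  generalize (pow2_ge_0 (Cmod (g 0%nat))). lra.
Qed.

Definition block_det (c1 c2 : R) (z : C) (a : nat) : C :=
  ((qn a - z) * (qn (S a) - z) - lam c1 c2 a * lam c1 c2 a)%C.

Lemma block_det_factor (c1 c2 : R) (z : C) (a : nat) :
  block_det c1 c2 z a = ((z - block_eig_plus c1 c2 a) * (z - block_eig_minus c1 c2 a))%C.
Proof.
  assert (Hs := sym2_eig_sum (qn a) (qn (S a)) (lam c1 c2 a)).
  assert (Hp := sym2_eig_prod (qn a) (qn (S a)) (lam c1 c2 a)).
  unfold block_det, block_eig_plus, block_eig_minus.
  destruct z as [x y]. apply injective_projections; simpl; nra.
Qed.

(* Solution of [(J - z) u = f] block by block (Cramer's rule on each [2 x 2] block). *)
Definition block_solve (c1 c2 : R) (z : C) (f : nat -> C) (k : nat) : C :=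
  if Req_EM_T (lam c1 c2 k) 0 then
    match k with
    | O => (f 0%nat / (1 - z))%C
    | S j => (((qn j - z) * f (S j) - lam c1 c2 j * f j) / block_det c1 c2 z j)%C
    end
  else (((qn (S k) - z) * f k - lam c1 c2 k * f (S k)) / block_det c1 c2 z k)%C.

Section Resolvent.

Variables (c1 c2 : R) (z : C) (eps : R).
Hypothesis blocks : block_diagonal c1 c2.
Hypothesis eps_pos : 0 < eps.
Hypothesis separated : forall w, eigenvalue c1 c2 w -> eps <= Cmod (z - w)%C.

Lemma Jshift_pointwise_lower_bound (u : nat -> C) (k : nat) :
  eps ^ 2 * Cmod (u k) ^ 2 <= local_norm2 (Jshift c1 c2 z u) k.
Proof.
  set (g := Jshift c1 c2 z u). unfold local_norm2.
  generalize (pow2_ge_0 (Cmod (g k))) (pow2_ge_0 (Cmod (g (S k)))). intros.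
  assert (0 <= shiftR (fun j => Cmod (g j) ^ 2) k)
    by (destruct k; simpl; [lra | apply pow2_ge_0]).
  destruct (blocks k) as [[a [Hk Ha]] | [-> Hsingle]].
  - assert (Ha' := Ha). destruct Ha' as [HL [HR _]].
    assert (B := Jshift_block2_lower_bound c1 c2 a z u eps HL HR (Rlt_le _ _ eps_pos)
      (separated _ (eigenvalue_of_block2 c1 c2 a _ Ha (or_introl eq_refl)))
      (separated _ (eigenvalue_of_block2 c1 c2 a _ Ha (or_intror eq_refl)))).
    fold g in B.
    assert (0 <= eps ^ 2 * Cmod (u a) ^ 2) by (apply Rmult_le_pos; apply pow2_ge_0).
    assert (0 <= eps ^ 2 * Cmod (u (S a)) ^ 2) by (apply Rmult_le_pos; apply pow2_ge_0).
    assert (0 <= Cmod (g (S (S a))) ^ 2) by apply pow2_ge_0.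
    destruct Hk as [-> | ->]; cbv beta iota delta [shiftR] in *; lra.
  - assert (E := separated _ (eigenvalue_one_of_single c1 c2 Hsingle)).
    unfold g in *. rewrite Jshift_single_norm by exact Hsingle.
    assert (eps ^ 2 <= Cmod (z - 1)%C ^ 2) by (apply pow_incr; lra).
    assert (eps ^ 2 * Cmod (u 0%nat) ^ 2 <= (Cmod (z - 1)%C * Cmod (u 0%nat)) ^ 2).
    { rewrite Rpow_mult_distr. apply Rmult_le_compat_r; [apply pow2_ge_0 | assumption]. }
    lra.
Qed.

Lemma l2_of_Jshift_l2 (u : nat -> C) : l2 (Jshift c1 c2 z u) -> l2 u.
Proof.
  intros Hg.
  assert (He2 : 0 < eps ^ 2) by (apply pow_lt, eps_pos).
  apply ex_series_le_R with (fun k => / eps ^ 2 * local_norm2 (Jshift c1 c2 z u) k).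
  - intros k; split; [apply pow2_ge_0|].
    apply (Rmult_le_reg_l (eps ^ 2)); [exact He2|].
    rewrite <- Rmult_assoc, Rinv_r, Rmult_1_l by lra. apply Jshift_pointwise_lower_bound.
  - apply (ex_series_scal_l (/ eps ^ 2) (local_norm2 _)), local_norm2_ex_series, Hg.
Qed.

Lemma l2norm2_le_Jshift (u : nat -> C) :
  Jdom c1 c2 u -> l2norm2 u <= 3 / eps ^ 2 * l2norm2 (Jshift c1 c2 z u).
Proof.
  intros Hu. assert (Hg := Jshift_l2 c1 c2 z u Hu).
  assert (He2 : 0 < eps ^ 2) by (apply pow_lt, eps_pos).
  apply Rle_trans with (Series (fun k => / eps ^ 2 * local_norm2 (Jshift c1 c2 z u) k)).
  - apply Series_le.
    + intros k; split; [apply pow2_ge_0|].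
      apply (Rmult_le_reg_l (eps ^ 2)); [exact He2|].
      rewrite <- Rmult_assoc, Rinv_r, Rmult_1_l by lra. apply Jshift_pointwise_lower_bound.
    + apply (ex_series_scal_l (/ eps ^ 2) (local_norm2 _)), local_norm2_ex_series, Hg.
  - rewrite Series_scal_l. unfold Rdiv.
    rewrite (Rmult_comm 3), Rmult_assoc.
    apply Rmult_le_compat_l; [apply Rlt_le, Rinv_0_lt_compat, He2|].
    apply local_norm2_Series, Hg.
Qed.

Lemma Jshift_injective (u v : nat -> C) :
  (forall k, Jshift c1 c2 z u k = Jshift c1 c2 z v k) -> forall k, u k = v k.
Proof.
  intros H k.
  assert (B := Jshift_pointwise_lower_bound (fun j => u j - v j)%C k).
  assert (Hd : forall j, Cmod (Jshift c1 c2 z (fun j => u j - v j)%C j) = 0).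
  { intros j. rewrite Jshift_sub, H. replace (_ - _)%C with (RtoC 0) by ring. apply Cmod_0. }
  unfold local_norm2, shiftR in B. rewrite !Hd in B.
  assert (Cmod (u k - v k)%C ^ 2 = 0).
  { generalize (pow2_ge_0 (Cmod (u k - v k)%C)) (pow_lt eps 2 eps_pos).
    destruct k; rewrite ?Hd in B; nra. }
  rewrite <- (Cplus_0_l (v k)), <- (Cmod2_eq0 _ H0). ring.
Qed.

Lemma block_solve_spec (f : nat -> C) (k : nat) :
  Jshift c1 c2 z (block_solve c1 c2 z f) k = f k.
Proof.
  destruct (blocks k) as [[a [Hk Ha]] | [-> Hsingle]].
  - assert (Ha' := Ha). destruct Ha' as [HL [HR Hb]].
    assert (HD : block_det c1 c2 z a <> 0%C).
    { rewrite block_det_factor. apply Cmult_neq_0; apply Cmod_gt_0;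
        eapply Rlt_le_trans; [exact eps_pos | |exact eps_pos|];
        apply separated, (eigenvalue_of_block2 c1 c2 a); auto. }
    assert (Ua : block_solve c1 c2 z f a =
      (((qn (S a) - z) * f a - lam c1 c2 a * f (S a)) / block_det c1 c2 z a)%C).
    { unfold block_solve. destruct (Req_EM_T (lam c1 c2 a) 0); [contradiction | reflexivity]. }
    assert (USa : block_solve c1 c2 z f (S a) =
      (((qn a - z) * f (S a) - lam c1 c2 a * f a) / block_det c1 c2 z a)%C).
    { unfold block_solve. destruct (Req_EM_T (lam c1 c2 (S a)) 0); [reflexivity | contradiction]. }
    unfold block_det in *.
    destruct Hk as [-> | ->];
      [rewrite Jshift_block_fst | rewrite Jshift_block_snd]; auto;
      rewrite Ua, USa; field; exact HD.
  - rewrite Jshift_single by exact Hsingle.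
    assert (N : (1 - z)%C <> 0%C).
    { intros N. assert (E := separated _ (eigenvalue_one_of_single c1 c2 Hsingle)).
      replace (z - 1)%C with (- (1 - z))%C in E by ring.
      rewrite N, Copp_0, Cmod_0 in E. lra. }
    unfold block_solve. destruct (Req_EM_T (lam c1 c2 0) 0); [|contradiction].
    field. exact N.
Qed.

Lemma in_resolvent_of_separated : in_resolvent c1 c2 z.
Proof.
  split; [| exists (3 / eps ^ 2); apply l2norm2_le_Jshift].
  intros f Hf. set (u := block_solve c1 c2 z f).
  assert (Hu : l2 u).
  { apply l2_of_Jshift_l2, (l2_ext f); [intros; symmetry; apply block_solve_spec | exact Hf]. }
  exists u. split.
  - split; [split; [exact Hu|] | exact (block_solve_spec f)].
    apply l2_ext with (fun k => f k + z * u k)%C.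
    + intros k. rewrite <- (block_solve_spec f k). unfold Jshift. fold u. ring.
    + apply l2_plus; [exact Hf | apply l2_scal, Hu].
  - intros v [_ Hv]. apply functional_extensionality. apply Jshift_injective.
    intros k. rewrite Hv. apply block_solve_spec.
Qed.

End Resolvent.

(* An eigenvector for an eigenvalue [w] gives [|(J - z) v| = |w - z| |v|], so the bound
   [|v|^2 <= K |(J - z) v|^2] fails as soon as [|w - z|^2 K < 1]. *)
Lemma closure_eigenvalue_not_resolvent (c1 c2 : R) (z : C) :
  closureC (eigenvalue c1 c2) z -> ~ in_resolvent c1 c2 z.
Proof.
  intros Hcl [_ [K HK]].
  assert (HK1 : 0 < Rabs K + 1) by (generalize (Rabs_pos K); lra).
  set (eps := Rmin 1 (/ (Rabs K + 1))).
  assert (He : 0 < eps) by (apply Rmin_pos; [lra | apply Rinv_0_lt_compat, HK1]).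
  destruct (Hcl eps He) as [w [[v [Hv [[k Hk] HJ]]] Hzw]].
  set (d := Cmod (w - z)%C).
  assert (Hd : d < eps).
  { unfold d. replace (w - z)%C with (- (z - w))%C by ring. now rewrite Cmod_opp. }
  assert (HN : l2norm2 (Jshift c1 c2 z v) = d ^ 2 * l2norm2 v).
  { unfold l2norm2. rewrite <- Series_scal_l. apply Series_ext. intros j.
    unfold Jshift. rewrite HJ. replace (w * v j - z * v j)%C with ((w - z) * v j)%C by ring.
    apply Cmod2_mult. }
  assert (Hpos : 0 < l2norm2 v).
  { apply Rlt_le_trans with (Cmod (v k) ^ 2).
    - apply pow_lt, Cmod_gt_0, Hk.
    - apply (Series_ge_term (fun j => Cmod (v j) ^ 2)); [intros; apply pow2_ge_0 | apply Hv]. }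
  assert (B := HK v Hv). rewrite HN in B.
  assert (Hd0 : 0 <= d) by apply Cmod_ge_0.
  assert (Hd2 : d ^ 2 * (Rabs K + 1) < 1).
  { assert (eps * (Rabs K + 1) <= 1).
    { apply Rle_trans with (/ (Rabs K + 1) * (Rabs K + 1)).
      - apply Rmult_le_compat_r; [lra | apply Rmin_r].
      - rewrite Rinv_l; lra. }
    assert (eps <= 1) by apply Rmin_l. nra. }
  assert (K * d ^ 2 < 1) by (generalize (Rle_abs K) (pow2_ge_0 d); nra).
  nra.
Qed.

Lemma not_closureC_separated (E : C -> Prop) (z : C) :
  ~ closureC E z -> exists eps, 0 < eps /\ forall w, E w -> eps <= Cmod (z - w)%C.
Proof.
  intros H. apply not_all_ex_not in H. destruct H as [eps H].
  apply imply_to_and in H. destruct H as [He H].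
  exists eps. split; [exact He|].
  intros w Ew. apply Rnot_lt_le. intros L. apply H. now exists w.
Qed.

Lemma spectrum_iff_closure_eigenvalue (c1 c2 : R) :
  block_diagonal c1 c2 -> forall z, spectrum c1 c2 z <-> closureC (eigenvalue c1 c2) z.
Proof.
  intros HB z. split.
  - intros Hs. apply NNPP. intros Hcl. apply Hs.
    destruct (not_closureC_separated _ _ Hcl) as [eps [He Hsep]].
    exact (in_resolvent_of_separated c1 c2 z eps HB He Hsep).
  - apply closure_eigenvalue_not_resolvent.
Qed.

(** * The cases [c2 = 0] and [c1 = 0] *)

Lemma lam_even (c1 c2 : R) (m : nat) : lam c1 c2 (2 * m) = c1 * (2 * INR m + 1).
Proof. unfold lam, cseq. rewrite Nat.even_even, S_INR, mult_INR. simpl (INR 2). ring. Qed.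

Lemma lam_odd (c1 c2 : R) (m : nat) : lam c1 c2 (S (2 * m)) = c2 * (2 * INR m + 2).
Proof.
  unfold lam, cseq. replace (S (2 * m)) with (2 * m + 1)%nat by lia.
  rewrite Nat.even_odd, !S_INR, plus_INR, mult_INR. simpl (INR 2). simpl (INR 1). ring.
Qed.

Lemma qn_even (m : nat) : qn (2 * m) = 2 * INR m + 1.
Proof. unfold qn. rewrite S_INR, mult_INR. simpl (INR 2). ring. Qed.

Lemma qn_odd (m : nat) : qn (S (2 * m)) = 2 * INR m + 2.
Proof. unfold qn. rewrite !S_INR, mult_INR. simpl (INR 2). ring. Qed.

Lemma nat_even_or_odd (k : nat) : exists m, k = (2 * m)%nat \/ k = S (2 * m).
Proof. destruct (Nat.Even_or_Odd k) as [[m Hm] | [m Hm]]; exists m; lia. Qed.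

Lemma block2_c2_zero (c1 : R) (m : nat) : c1 <> 0 -> block2 c1 0 (2 * m).
Proof.
  intros H1. split; [|split].
  - destruct m as [|m]; [now left | right].
    replace (pred (2 * S m)) with (S (2 * m)) by lia. rewrite lam_odd. ring.
  - rewrite lam_odd. ring.
  - rewrite lam_even. apply Rmult_integral_contrapositive.
    generalize (pos_INR m). intros. split; lra.
Qed.

Lemma block_diagonal_c2_zero (c1 : R) : c1 <> 0 -> block_diagonal c1 0.
Proof.
  intros H1 k. left. destruct (nat_even_or_odd k) as [m Hm].
  exists (2 * m)%nat. split; [exact Hm | apply block2_c2_zero, H1].
Qed.

Lemma block2_c2_zero_index (c1 : R) (a : nat) : block2 c1 0 a -> exists m, a = (2 * m)%nat.
Proof.
  intros [_ [_ Hb]]. destruct (nat_even_or_odd a) as [m [-> | ->]]; [now exists m|].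
  rewrite lam_odd in Hb. lra.
Qed.

Lemma block_eig_c2_zero (c1 c : R) (m : nat) : c ^ 2 = c1 ^ 2 ->
  block_eig_plus c1 0 (2 * m) = lamp c (S m) /\ block_eig_minus c1 0 (2 * m) = lamm c (S m).
Proof.
  intros Hc. unfold block_eig_plus, block_eig_minus, sym2_eig_plus, sym2_eig_minus, lamp, lamm.
  rewrite qn_even, qn_odd, lam_even, S_INR.
  replace ((2 * INR m + 1 - (2 * INR m + 2)) ^ 2 + 4 * (c1 * (2 * INR m + 1)) ^ 2)
    with (4 * c ^ 2 * (2 * (INR m + 1) - 1) ^ 2 + 1) by (rewrite Hc; ring).
  split; field.
Qed.

Lemma eigenvalue_c2_zero_iff (c1 c : R) (z : C) : c1 <> 0 -> c ^ 2 = c1 ^ 2 ->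
  eigenvalue c1 0 z <->
  exists n : nat, (1 <= n)%nat /\ (z = RtoC (lamp c n) \/ z = RtoC (lamm c n)).
Proof.
  intros H1 Hc. split.
  - intros Hz.
    destruct (eigenvalue_block_cases c1 0 z (block_diagonal_c2_zero c1 H1) Hz)
      as [[a [Ha Hza]] | [H0 _]].
    + destruct (block2_c2_zero_index c1 a Ha) as [m ->].
      exists (S m). split; [lia|].
      destruct (block_eig_c2_zero c1 c m Hc) as [<- <-]. exact Hza.
    + unfold lam, cseq in H0. simpl in H0. lra.
  - intros [[|m] [Hn Hz]]; [lia|].
    destruct (block_eig_c2_zero c1 c m Hc) as [Ep Em]. rewrite <- Ep, <- Em in Hz.
    destruct Hz as [-> | ->];
      apply (eigenvalue_of_block2 c1 0 (2 * m)); auto using block2_c2_zero.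
Qed.

Lemma block2_c1_zero (c2 : R) (m : nat) : c2 <> 0 -> block2 0 c2 (S (2 * m)).
Proof.
  intros H2. split; [|split].
  - right. change (pred (S (2 * m))) with (2 * m)%nat. rewrite lam_even. ring.
  - replace (S (S (2 * m))) with (2 * S m)%nat by lia. rewrite lam_even. ring.
  - rewrite lam_odd. apply Rmult_integral_contrapositive.
    generalize (pos_INR m). intros. split; lra.
Qed.

Lemma block_diagonal_c1_zero (c2 : R) : c2 <> 0 -> block_diagonal 0 c2.
Proof.
  intros H2 k. destruct (nat_even_or_odd k) as [[|m] [-> | ->]].
  - right. split; [reflexivity|]. unfold lam, cseq. simpl. ring.
  - left. exists 1%nat. split; [now left | apply (block2_c1_zero c2 0), H2].
  - left. exists (S (2 * m)). split; [right; lia | apply block2_c1_zero, H2].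
  - left. exists (S (2 * S m)). split; [now left | apply block2_c1_zero, H2].
Qed.

Lemma block2_c1_zero_index (c2 : R) (a : nat) : block2 0 c2 a -> exists m, a = S (2 * m).
Proof.
  intros [_ [_ Hb]]. destruct (nat_even_or_odd a) as [m [-> | ->]]; [|now exists m].
  rewrite lam_even in Hb. lra.
Qed.

Lemma block_eig_c1_zero (c2 c : R) (m : nat) : c ^ 2 = c2 ^ 2 ->
  block_eig_plus 0 c2 (S (2 * m)) = tlamp c (S (S m)) /\
  block_eig_minus 0 c2 (S (2 * m)) = tlamm c (S (S m)).
Proof.
  intros Hc. unfold block_eig_plus, block_eig_minus, sym2_eig_plus, sym2_eig_minus, tlamp, tlamm.
  replace (S (S (2 * m))) with (2 * S m)%nat by lia.
  rewrite qn_odd, qn_even, lam_odd, !S_INR.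
  replace ((2 * INR m + 2 - (2 * (INR m + 1) + 1)) ^ 2 + 4 * (c2 * (2 * INR m + 2)) ^ 2)
    with (4 * c ^ 2 * (2 * (INR m + 1 + 1) - 2) ^ 2 + 1) by (rewrite Hc; ring).
  split; field.
Qed.

Lemma eigenvalue_c1_zero_iff (c2 c : R) (z : C) : c2 <> 0 -> c ^ 2 = c2 ^ 2 ->
  eigenvalue 0 c2 z <->
  z = RtoC 1 \/ exists n : nat, (2 <= n)%nat /\ (z = RtoC (tlamp c n) \/ z = RtoC (tlamm c n)).
Proof.
  intros H2 Hc. split.
  - intros Hz.
    destruct (eigenvalue_block_cases 0 c2 z (block_diagonal_c1_zero c2 H2) Hz)
      as [[a [Ha Hza]] | [_ Hz1]]; [right | now left].
    destruct (block2_c1_zero_index c2 a Ha) as [m ->].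
    exists (S (S m)). split; [lia|].
    destruct (block_eig_c1_zero c2 c m Hc) as [<- <-]. exact Hza.
  - intros [-> | [[|[|m]] [Hn Hz]]]; [| lia | lia |].
    + apply eigenvalue_one_of_single. unfold lam, cseq. simpl. ring.
    + destruct (block_eig_c1_zero c2 c m Hc) as [Ep Em]. rewrite <- Ep, <- Em in Hz.
      destruct Hz as [-> | ->];
        apply (eigenvalue_of_block2 0 c2 (S (2 * m))); auto using block2_c1_zero.
Qed.

(** * Asymptotics of the eigenvalues *)

Lemma sqrt_sq_add1_bounds (T : R) : 0 <= T -> T <= sqrt (T ^ 2 + 1) <= T + 1.
Proof.
  intros H. split.
  - rewrite <- (sqrt_pow2 T H) at 1. apply sqrt_le_1_alt. lra.
  - rewrite <- (sqrt_pow2 (T + 1)) by lra. apply sqrt_le_1_alt. nra.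
Qed.

Lemma sqrt_sq_add1_gap (T : R) : 0 <= T -> sqrt (T ^ 2 + 1) - T = / (sqrt (T ^ 2 + 1) + T).
Proof.
  intros H. destruct (sqrt_sq_add1_bounds T H) as [HS _].
  assert (E : sqrt (T ^ 2 + 1) * sqrt (T ^ 2 + 1) = T ^ 2 + 1)
    by (apply sqrt_sqrt; generalize (pow2_ge_0 T); lra).
  field_simplify_eq; [|assert (0 < sqrt (T ^ 2 + 1)) by (apply sqrt_lt_R0; nra); lra].
  nra.
Qed.

(* [sqrt (T^2 + 1) = T + 1 / (2 T) + O(T^-3)] with [T = 4 c X + O(1)]. *)
Lemma sqrt_sq_add1_second_order (c X T : R) :
  0 < c -> 1 <= X -> 2 * c * X <= T -> Rabs (4 * T - 16 * c * X) <= 16 * c ->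
  Rabs ((T - sqrt (T ^ 2 + 1)) / 2 + 1 / (16 * c * X)) <=
  (16 * c + 1 / (2 * c)) / (128 * c ^ 2) * Rabs (1 / X ^ 2).
Proof.
  intros Hc HX HT HA.
  assert (HT0 : 0 < T) by nra.
  assert (Hgap := sqrt_sq_add1_gap T (Rlt_le _ _ HT0)).
  destruct (sqrt_sq_add1_bounds T (Rlt_le _ _ HT0)) as [HS _].
  set (S := sqrt (T ^ 2 + 1)) in *. set (Y := S + T) in *.
  assert (HY : 4 * c * X <= Y) by (unfold Y; nra).
  assert (HcX : 0 < c * X) by nra.
  assert (HN : Rabs (2 * Y - 16 * c * X) <= 16 * c + 1 / (2 * c)).
  { replace (2 * Y - 16 * c * X) with ((4 * T - 16 * c * X) + 2 * (S - T)) by (unfold Y; ring).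
    rewrite Hgap.
    assert (0 < 2 * / Y <= 1 / (2 * c)).
    { split; [apply Rmult_lt_0_compat; [lra | apply Rinv_0_lt_compat; lra]|].
      replace (1 / (2 * c)) with (2 * / (4 * c)) by (field; lra).
      apply Rmult_le_compat_l; [lra | apply Rinv_le_contravar; nra]. }
    eapply Rle_trans; [apply Rabs_triang|]. rewrite (Rabs_pos_eq (2 * / Y)); lra. }
  replace ((T - S) / 2 + 1 / (16 * c * X)) with ((2 * Y - 16 * c * X) / (32 * (c * X) * Y))
    by (replace (T - S) with (- / Y) by lra; field; repeat split; nra).
  assert (HD : 128 * c ^ 2 * X ^ 2 <= 32 * (c * X) * Y) by nra.
  rewrite Rabs_div, (Rabs_pos_eq (32 * (c * X) * Y)), (Rabs_pos_eq (1 / X ^ 2)) by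
    (try apply Rlt_le; try apply Rdiv_lt_0_compat; nra).
  apply Rle_trans with ((16 * c + 1 / (2 * c)) / (128 * c ^ 2 * X ^ 2)).
  - unfold Rdiv. apply Rmult_le_compat; try lra.
    + apply Rabs_pos.
    + apply Rlt_le, Rinv_0_lt_compat. nra.
    + apply Rinv_le_contravar; nra.
  - right. field. nra.
Qed.

Lemma bigO_lamp (c : R) : 0 < c ->
  bigO_seq (lamp c) (fun n => 2 * (1 + c) * INR n) (fun _ => 1).
Proof.
  intros Hc. exists (1 + c), 1%nat. intros n Hn.
  assert (HX : 1 <= INR n) by exact (le_INR 1 n Hn).
  unfold lamp. set (X := INR n) in *.
  replace (4 * c ^ 2 * (2 * X - 1) ^ 2 + 1) with ((2 * c * (2 * X - 1)) ^ 2 + 1) by ring.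
  assert (HT : 0 <= 2 * c * (2 * X - 1)) by nra.
  destruct (sqrt_sq_add1_bounds _ HT).
  rewrite Rabs_R1, Rmult_1_r. apply Rabs_le. lra.
Qed.

Lemma bigO_tlamp (c : R) : 0 < c ->
  bigO_seq (tlamp c) (fun n => 2 * (1 + c) * INR n) (fun _ => 1).
Proof.
  intros Hc. exists (2 + 2 * c), 1%nat. intros n Hn.
  assert (HX : 1 <= INR n) by exact (le_INR 1 n Hn).
  unfold tlamp. set (X := INR n) in *.
  replace (4 * c ^ 2 * (2 * X - 2) ^ 2 + 1) with ((2 * c * (2 * X - 2)) ^ 2 + 1) by ring.
  assert (HT : 0 <= 2 * c * (2 * X - 2)) by nra.
  destruct (sqrt_sq_add1_bounds _ HT).
  rewrite Rabs_R1, Rmult_1_r. apply Rabs_le. lra.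
Qed.

Lemma bigO_lamm (c : R) : 0 < c ->
  bigO_seq (lamm c)
    (fun n => 2 * (1 - c) * INR n + (c - 1/2) - 1 / (16 * c * INR n))
    (fun n => 1 / (INR n) ^ 2).
Proof.
  intros Hc. exists ((16 * c + 1 / (2 * c)) / (128 * c ^ 2)), 1%nat. intros n Hn.
  assert (HX : 1 <= INR n) by exact (le_INR 1 n Hn).
  unfold lamm. set (X := INR n) in *.
  replace (4 * c ^ 2 * (2 * X - 1) ^ 2 + 1) with ((2 * c * (2 * X - 1)) ^ 2 + 1) by ring.
  replace ((4 * X - 1 - sqrt ((2 * c * (2 * X - 1)) ^ 2 + 1)) / 2
           - (2 * (1 - c) * X + (c - 1 / 2) - 1 / (16 * c * X)))
    with ((2 * c * (2 * X - 1) - sqrt ((2 * c * (2 * X - 1)) ^ 2 + 1)) / 2 + 1 / (16 * c * X))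
    by (field; lra).
  apply sqrt_sq_add1_second_order; [lra | lra | nra|].
  replace (4 * (2 * c * (2 * X - 1)) - 16 * c * X) with (- (8 * c)) by ring.
  rewrite Rabs_Ropp, Rabs_pos_eq; lra.
Qed.

Lemma bigO_tlamm (c : R) : 0 < c ->
  bigO_seq (tlamm c)
    (fun n => 2 * (1 - c) * INR n + (2 * c - 3/2) - 1 / (16 * c * INR n))
    (fun n => 1 / (INR n) ^ 2).
Proof.
  intros Hc. exists ((16 * c + 1 / (2 * c)) / (128 * c ^ 2)), 2%nat. intros n Hn.
  assert (HX : 2 <= INR n) by exact (le_INR 2 n Hn).
  unfold tlamm. set (X := INR n) in *.
  replace (4 * c ^ 2 * (2 * X - 2) ^ 2 + 1) with ((2 * c * (2 * X - 2)) ^ 2 + 1) by ring.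
  replace ((4 * X - 3 - sqrt ((2 * c * (2 * X - 2)) ^ 2 + 1)) / 2
           - (2 * (1 - c) * X + (2 * c - 3 / 2) - 1 / (16 * c * X)))
    with ((2 * c * (2 * X - 2) - sqrt ((2 * c * (2 * X - 2)) ^ 2 + 1)) / 2 + 1 / (16 * c * X))
    by (field; lra).
  apply sqrt_sq_add1_second_order; [lra | lra | nra|].
  replace (4 * (2 * c * (2 * X - 2)) - 16 * c * X) with (- (16 * c)) by ring.
  rewrite Rabs_Ropp, Rabs_pos_eq; lra.
Qed.

Lemma Rmax_abs_pos (c1 c2 : R) : Rmax (Rabs c1) (Rabs c2) <> 0 -> 0 < Rmax (Rabs c1) (Rabs c2).
Proof.
  intros H. generalize (Rabs_pos c1) (Rmax_l (Rabs c1) (Rabs c2)). lra.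
Qed.

Lemma Rmax_abs_sq_l (c1 : R) : Rmax (Rabs c1) (Rabs 0) ^ 2 = c1 ^ 2.
Proof.
  rewrite Rabs_R0, Rmax_left by apply Rabs_pos.
  rewrite <- !Rsqr_pow2. symmetry. apply Rsqr_abs.
Qed.

Lemma Rmax_abs_sq_r (c2 : R) : Rmax (Rabs 0) (Rabs c2) ^ 2 = c2 ^ 2.
Proof.
  rewrite Rabs_R0, Rmax_right by apply Rabs_pos.
  rewrite <- !Rsqr_pow2. symmetry. apply Rsqr_abs.
Qed.

Lemma block_diagonal_of_prod_zero (c1 c2 : R) :
  c1 * c2 = 0 -> Rmax (Rabs c1) (Rabs c2) <> 0 -> block_diagonal c1 c2.
Proof.
  intros hprod hc. destruct (Rmult_integral _ _ hprod) as [-> | ->].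
  - apply block_diagonal_c1_zero. intros ->. apply hc. rewrite Rabs_R0. apply Rmax_left. lra.
  - apply block_diagonal_c2_zero. intros ->. apply hc. rewrite Rabs_R0. apply Rmax_left. lra.
Qed.

Theorem theorem5 (c1 c2 : R) (hprod : c1 * c2 = 0)
  (hc : Rmax (Rabs c1) (Rabs c2) <> 0) :
  let c := Rmax (Rabs c1) (Rabs c2) in
  (forall z : C, spectrum c1 c2 z <-> closureC (eigenvalue c1 c2) z) /\
  (c1 <> 0 /\ c2 = 0 ->
     forall z : C, eigenvalue c1 c2 z <->
       exists n : nat, (1 <= n)%nat /\
         (z = RtoC (lamp c n) \/ z = RtoC (lamm c n))) /\
  (c1 = 0 /\ c2 <> 0 ->
     forall z : C, eigenvalue c1 c2 z <->
       z = RtoC 1 \/ exists n : nat, (2 <= n)%nat /\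
         (z = RtoC (tlamp c n) \/ z = RtoC (tlamm c n))) /\
  bigO_seq (lamp c) (fun n => 2 * (1 + c) * INR n) (fun _ => 1) /\
  bigO_seq (tlamp c) (fun n => 2 * (1 + c) * INR n) (fun _ => 1) /\
  bigO_seq (lamm c)
    (fun n => 2 * (1 - c) * INR n + (c - 1/2) - 1 / (16 * c * INR n))
    (fun n => 1 / (INR n) ^ 2) /\
  bigO_seq (tlamm c)
    (fun n => 2 * (1 - c) * INR n + (2 * c - 3/2) - 1 / (16 * c * INR n))
    (fun n => 1 / (INR n) ^ 2).
Proof.
  intros c. assert (Hc : 0 < c) by exact (Rmax_abs_pos c1 c2 hc).
  split; [apply spectrum_iff_closure_eigenvalue, block_diagonal_of_prod_zero; assumption|].
  split; [intros [H1 ->] z; apply eigenvalue_c2_zero_iff; [exact H1 | apply Rmax_abs_sq_l]|].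
  split; [intros [-> H2] z; apply eigenvalue_c1_zero_iff; [exact H2 | apply Rmax_abs_sq_r]|].
  repeat split; [apply bigO_lamp | apply bigO_tlamp | apply bigO_lamm | apply bigO_tlamm];
    exact Hc.
Qed.
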